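(* Let $Y$ be a random variable whose moment generating function $E[e^{tY}]$ exists for $|t|<r_0$ for some $r_0>0$. Let $(Y_j)_{j\ge1}$ be mutually independent copies of $Y$, $S_0=0$, $S_k=Y_1+\cdots+Y_k$ for $k\ge1$. Define the probabilistic bivariate Bell polynomials $\phi_n^Y(x,y)$ by $$\Big(1+y\big(E[e^{Yt}]-1\big)\Big)^{x}=\sum_{n=0}^{\infty}\phi_n^Y(x,y)\frac{t^n}{n!}.$$ Then for every $n\ge 0$, $$\phi_n^Y(x,y)=\sum_{k=0}^{n}{n\brace k}_Y (x)_k\, y^k,$$ where ${n\brace k}_Y=\frac{1}{k!}\sum_{i=0}^{k}\binom{k}{i}(-1)^{k-i}E[S_i^n]$ for $0\le k\le n$.
   Context: $(x)_0=1$, $(x)_k=x(x-1)\cdots(x-k+1)$ for $k\ge1$. The power $(1+u)^x$ is understood via the binomial series $\sum_{k\ge0}\binom{x}{k}u^k$, and the identity is one of power series in $t$; $x,y$ are variables. The numbers ${n\brace k}_Y$ are the probabilistic Stirling numbers of the second kind associated with $Y$. *)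

From HB Require Import structures.
From mathcomp Require Import all_boot all_order all_algebra.
From mathcomp Require Import all_classical all_reals all_analysis.
Set Implicit Arguments. Unset Strict Implicit. Unset Printing Implicit Defensive.
Import Order.TTheory GRing.Theory Num.Theory.
Import numFieldNormedType.Exports.
Local Open Scope classical_set_scope.
Local Open Scope ring_scope.

Section defs.
Context d (T : measurableType d) (R : realType) (P : probability T R).

Definition mutually_independent (X : nat -> {RV P >-> R}) : Prop :=
  forall (I : seq nat) (B : nat -> set R),
    uniq I -> (forall i, i \in I -> measurable (B i)) ->
    P (\bigcap_(i in [set j | j \in I]) (X i @^-1` B i)) =
    (\prod_(i <- I) P (X i @^-1` B i))%E.

Definition same_distribution (X X' : {RV P >-> R}) : Prop :=
  forall B : set R, measurable B -> P (X' @^-1` B) = P (X @^-1` B).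

(** S_k = Y_1 + ... + Y_k, where Y_{j+1} is [Ys j]; S_0 = 0 *)
Definition partial_sum (Ys : nat -> {RV P >-> R}) (k : nat) : T -> R :=
  fun w => \sum_(j < k) Ys j w.

(** E[S_i^n] (a real number; finite under the MGF hypothesis) *)
Definition sum_moment (Ys : nat -> {RV P >-> R}) (n i : nat) : R :=
  fine 'E_P[fun w => partial_sum Ys i w ^+ n].

Definition stirling2Y (Ys : nat -> {RV P >-> R}) (n k : nat) : R :=
  (k`!%:R)^-1 * \sum_(i < k.+1) 'C(k, i)%:R * (-1) ^+ (k - i) * sum_moment Ys n i.

(** coefficients of the formal power series E[e^{Yt}] = sum_m E[Y^m] t^m / m! *)
Definition mgf_coef (Y : {RV P >-> R}) (m : nat) : R :=
  fine 'E_P[fun w => Y w ^+ m] / m`!%:R.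

End defs.

(** Formal power series in t over R, as coefficient sequences. *)
Definition fps_one {R : ringType} : nat -> R := fun n => (n == 0)%:R.
Definition fps_mul {R : ringType} (a b : nat -> R) : nat -> R :=
  fun n => \sum_(i < n.+1) a i * b (n - i)%N.
Definition fps_exp {R : ringType} (a : nat -> R) (k : nat) : nat -> R :=
  iter k (fps_mul a) fps_one.

Definition falling {R : ringType} (x : R) (k : nat) : R :=
  \prod_(i < k) (x - i%:R).

Definition gbinom {R : fieldType} (x : R) (k : nat) : R := falling x k / k`!%:R.

(** phi_n^Y(x,y): n! times the coefficient of t^n in
    (1 + y (E[e^{Yt}] - 1))^x := sum_{k>=0} binom(x,k) (y (E[e^{Yt}] - 1))^k,
    the infinite sum over k taken as a limit of partial sums. *)
Definition bell_phiY d (T : measurableType d) (R : realType) (P : probability T R)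
  (Y : {RV P >-> R}) (n : nat) (x y : R) : R :=
  let u : nat -> R := fun m => y * (mgf_coef Y m - fps_one m) in
  n`!%:R * limn (series (fun k => gbinom x k * fps_exp u k n)).

(* Write M(t) = E[e^{tY}] = sum_m E[Y^m] t^m / m!.  Independence of Y_{i+1} from S_i gives
   E[S_{i+1}^n] = sum_l C(n,l) E[S_i^(n-l)] E[Y^l], which is the coefficient recursion of
   M^(i+1) = M^i * M; hence E[S_i^n] = n! [t^n] M(t)^i.  Expanding (M - 1)^k binomially then
   gives n! [t^n] (y (M - 1))^k = k! y^k {n brace k}_Y, and as M - 1 has no constant term only
   the terms k <= n of the binomial series defining phi_n^Y survive.
   Independence is used through E[prod_i g_i(Y_i)] = prod_i E[g_i(Y_i)], derived from the
   product rule for joint events by simple-function approximation and splitting into positive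
   and negative parts; all moments are finite since |y|^m <= m!/s^m (e^{sy} + e^{-sy}). *)

From HB Require Import structures.
From mathcomp Require Import all_boot all_order all_algebra.
From mathcomp Require Import all_classical all_reals all_analysis.
From mathcomp Require Import measurable_realfun.
From mathcomp Require Import ring lra zify.
Set Implicit Arguments. Unset Strict Implicit. Unset Printing Implicit Defensive.
Import Order.TTheory GRing.Theory Num.Theory.
Import numFieldNormedType.Exports.
Import HBNNSimple.
Local Open Scope classical_set_scope.
Local Open Scope ring_scope.

Section integral_nnsfun_comp.
Context d (T : measurableType d) (R : realType) (mu : {measure set T -> \bar R}).

Lemma ge0_integral_nnsfun_compM (D : set T) (Z : {mfun T >-> R}) (F : T -> R)
    (h : {nnsfun R >-> R}) :
  measurable D -> measurable_fun setT F -> (forall w, 0 <= F w) ->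
  (\int[mu]_(w in D) (h (Z w) * F w)%:E =
   \sum_(v \in range h)
     v%:E * \int[mu]_(w in D `&` Z @^-1` (h @^-1` [set v])) (F w)%:E)%E.
Proof.
move=> mD mF F0; have fin_h := @fimfunP _ _ h.
(* [`|v|] agrees with [v] on [range h] and keeps every summand nonnegative. *)
have hE y : h y = \sum_(v \in range h) `|v| * \1_(h @^-1` [set v]) y.
  by rewrite fimfunE; apply: eq_fsbigr => _ /set_mem[z _ <-]; rewrite ger0_norm.
have mZv v : measurable_fun setT (fun w => \1_(h @^-1` [set v]) (Z w) * F w).
  by apply: measurable_funM => //; apply: measurableT_comp => //; exact: measurable_funP.
under eq_integral do rewrite hE fsbig_finite // big_distrl -sumEFin.
rewrite ge0_integral_sum //= ?fsbig_finite //; last 2 first.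
- move=> v; apply/measurable_EFinP; apply: (measurable_funS measurableT) => //.
  by under eq_fun do rewrite -mulrA; exact: measurable_funM.
- by move=> v w _; rewrite lee_fin mulr_ge0.
apply: eq_big_seq => v; rewrite in_fset_set // inE => -[y _ <-] {v}.
under eq_integral do rewrite -mulrA EFinM.
rewrite ge0_integralZl_EFin // ?ger0_norm //; last 2 first.
- by move=> w _; rewrite lee_fin mulr_ge0.
- by apply/measurable_EFinP; apply: (measurable_funS measurableT).
congr (_ * _)%E; rewrite integral_mkcondr epatch_indic.
by apply: eq_integral => w _; rewrite /= -EFinM mulrC.
Qed.

Lemma integral_nnsfun_comp (Z : {mfun T >-> R}) (h : {nnsfun R >-> R}) :
  (\int[mu]_w (h (Z w))%:E =
   \sum_(v \in range h) v%:E * mu (Z @^-1` (h @^-1` [set v])))%E.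
Proof.
transitivity (\int[mu]_w (h (Z w) * cst 1 w)%:E)%E.
  by apply: eq_integral => w _; rewrite mulr1.
rewrite ge0_integral_nnsfun_compM //; apply: eq_fsbigr => v _.
by rewrite setTI /= integral_cst ?mul1e //; do 2 apply: measurable_funPTI.
Qed.

Lemma ge0_integral_compM_nnsfun_ext (D : set T) (Z : {mfun T >-> R}) (F : T -> R)
    (C : \bar R) :
  measurable D -> measurable_fun setT F -> (forall w, 0 <= F w) -> C \is a fin_num ->
  (forall h : {nnsfun R >-> R},
    \int[mu]_(w in D) (h (Z w) * F w)%:E = C * \int[mu]_w (h (Z w))%:E)%E ->
  forall g : R -> R, measurable_fun setT g -> (forall y, 0 <= g y) ->
  (\int[mu]_(w in D) (g (Z w) * F w)%:E = C * \int[mu]_w (g (Z w))%:E)%E.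
Proof.
move=> mD mF F0 finC hF g mg g0.
have mEg : measurable_fun setT (EFin \o g) by exact/measurable_EFinP.
pose h := nnsfun_approx measurableT mEg.
have h_cvg (E : set T) (G : T -> R) : measurable E -> measurable_fun setT G -> (forall w, 0 <= G w) ->
    (\int[mu]_(w in E) (h n (Z w) * G w)%:E @[n --> \oo] -->
     \int[mu]_(w in E) (g (Z w) * G w)%:E)%E.
  move=> mE mG G0.
  have mhG n : measurable_fun E (fun w => (h n (Z w) * G w)%:E).
    apply/measurable_EFinP/(measurable_funS measurableT) => //.
    by apply: measurable_funM => //; exact: measurableT_comp.
  have nd_hG w : E w -> nondecreasing_seq (fun n => (h n (Z w) * G w)%:E).
    by move=> _ m n mn; rewrite lee_fin ler_wpM2r //; exact/lefP/nd_nnsfun_approx.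
  have hG0 n w : E w -> (0 <= (h n (Z w) * G w)%:E)%E by rewrite lee_fin mulr_ge0.
  suff -> : (\int[mu]_(w in E) (g (Z w) * G w)%:E =
      \int[mu]_(w in E) limn (fun n => (h n (Z w) * G w)%:E))%E.
    exact: cvg_monotone_convergence.
  apply: eq_integral => w _; apply/esym/cvg_lim => //.
  rewrite EFinM; under eq_fun do rewrite EFinM; apply: cvgeZr => //.
  have g0E y : setT y -> (0 <= (EFin \o g) y)%E by rewrite lee_fin.
  exact: (cvg_nnsfun_approx _ _ g0E).
have /cvg_lim <- // := h_cvg D F mD mF F0.
under eq_fun do rewrite hF.
have := h_cvg setT (cst 1) measurableT (measurable_cst _) (fun=> ler01).
under eq_fun do under eq_integral do rewrite mulr1.
under eq_integral do rewrite mulr1.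
by move=> /(cvgeZl finC) /cvg_lim; apply.
Qed.

End integral_nnsfun_comp.

Section independent_product.
Context d (T : measurableType d) (R : realType) (P : probability T R).
Variable X : nat -> {RV P >-> R}.
Hypothesis indX : mutually_independent X.

Definition joint_event (J : seq nat) (B : nat -> set R) : set T :=
  \bigcap_(i in [set j | j \in J]) (X i @^-1` B i).

Lemma joint_event_nil B : joint_event [::] B = setT.
Proof. by apply/seteqP; split => // w _ i /=; rewrite in_nil. Qed.

Lemma joint_event_cons a J B :
  joint_event (a :: J) B = X a @^-1` B a `&` joint_event J B.
Proof.
apply/seteqP; split => w.
- move=> Jw; split=> [|i iJ]; apply: Jw; rewrite /= in_cons ?eqxx //.
  by rewrite iJ orbT.
- by move=> [Ba Jw] i /=; rewrite in_cons => /predU1P[-> //|]; exact: Jw.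
Qed.

Lemma measurable_joint_event J B :
  (forall i, measurable (B i)) -> measurable (joint_event J B).
Proof.
move=> mB; elim: J => [|a J IH]; first by rewrite joint_event_nil.
by rewrite joint_event_cons; apply: measurableI => //; exact: measurable_funPTI.
Qed.

Lemma eq_joint_event J B B' : {in J, B =1 B'} -> joint_event J B = joint_event J B'.
Proof.
by move=> eB; apply/seteqP; split => w Jw i /= iJ; [rewrite -eB | rewrite eB] => //;
  exact: Jw.
Qed.

(* Each level set of [h \o X a] cuts [joint_event J B] down to a joint event over [a :: J]. *)
Lemma integral_nnsfun_joint_event (F : T -> R) (c : \bar R) (a : nat) (J : seq nat)
    (B : nat -> set R) (h : {nnsfun R >-> R}) :
  a \notin J -> uniq J -> (forall i, measurable (B i)) ->
  measurable_fun setT F -> (forall w, 0 <= F w) -> c \is a fin_num ->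
  (forall B', (forall i, measurable (B' i)) ->
    \int[P]_(w in joint_event (a :: J) B') (F w)%:E = P (joint_event (a :: J) B') * c)%E ->
  (\int[P]_(w in joint_event J B) (h (X a w) * F w)%:E =
   P (joint_event J B) * c * \int[P]_w (h (X a w))%:E)%E.
Proof.
move=> aJ uJ mB mF F0 cfin FJ.
have mD : measurable (joint_event J B) by exact: measurable_joint_event.
have mXh v : measurable (X a @^-1` (h @^-1` [set v])) by do 2 apply: measurable_funPTI.
rewrite integral_nnsfun_comp ge0_integral_nnsfun_compM //.
rewrite !fsbig_finite //= fin_num_sume_distrr; last 2 first.
- by rewrite fin_numM // fin_num_measure.
- by move=> v w _ _; rewrite fin_num_adde_defl // fin_numM // fin_num_measure.
apply: eq_bigr => v _; pose Bv := [eta B with a |-> h @^-1` [set v]].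
have mBv i : measurable (Bv i) by rewrite /Bv /=; case: ifP => // _; exact: measurable_funPTI.
have eBv : {in J, Bv =1 B} by move=> i iJ /=; rewrite ifN //; apply: contraNneq aJ => <-.
have -> : joint_event J B `&` X a @^-1` (h @^-1` [set v]) = joint_event (a :: J) Bv.
  by rewrite joint_event_cons /= eqxx setIC (eq_joint_event eBv).
have uaJ : uniq (a :: J) by rewrite /= aJ.
rewrite FJ // indX // big_cons (eq_big_seq (fun i => P (X i @^-1` B i))) => [|i /eBv ->] //.
by rewrite -indX // /Bv /= eqxx [RHS]muleC -muleA -[RHS]muleA.
Qed.

Lemma ge0_integral_prod_indep (g : nat -> R -> R) (I J : seq nat) (B : nat -> set R) :
  (forall i, measurable_fun setT (g i)) ->
  (forall i, i \in I -> forall y, 0 <= g i y) ->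
  (forall i, i \in I -> \int[P]_w (g i (X i w))%:E < +oo)%E ->
  uniq (J ++ I) -> (forall i, measurable (B i)) ->
  (\int[P]_(w in joint_event J B) (\prod_(i <- I) g i (X i w))%:E =
   P (joint_event J B) * \prod_(i <- I) \int[P]_w (g i (X i w))%:E)%E.
Proof.
move=> mg; elim: I J B => [|a I IH] J B g0 gfin uJI mB.
  under eq_integral do rewrite big_nil.
  by rewrite big_nil mule1 integral_cst ?mul1e //; exact: measurable_joint_event.
have uaJI : uniq (a :: J ++ I) by rewrite -cat1s uniq_catCA.
move: (uaJI) => /= /andP[]; rewrite mem_cat negb_or => /andP[aJ _].
rewrite cat_uniq => /andP[uJ _].
have Ia : {subset I <= a :: I} := @mem_behead _ (a :: I).
have {IH} IH J' B' := IH J' B' (fun i iI => g0 i (Ia i iI)) (fun i iI => gfin i (Ia i iI)).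
set F := fun w => \prod_(i <- I) g i (X i w).
set c := (\prod_(i <- I) \int[P]_w (g i (X i w))%:E)%E.
have mF : measurable_fun setT F.
  by apply: measurable_prod => i _; exact: measurableT_comp.
have F0 w : 0 <= F w by rewrite /F big_seq; apply: prodr_ge0 => i /Ia/g0.
have cfin : c \is a fin_num.
  rewrite /c big_seq prode_fin_num // => i iI.
  rewrite ge0_fin_numE ?gfin ?Ia //.
  by apply: integral_ge0 => w _; rewrite lee_fin g0 ?Ia.
rewrite big_cons (muleC _ c) muleA.
under eq_integral do rewrite big_cons -/(F _).
have mD : measurable (joint_event J B) by exact: measurable_joint_event.
apply: ge0_integral_compM_nnsfun_ext => //.
- by rewrite fin_numM // fin_num_measure.
- by move=> h; apply: integral_nnsfun_joint_event => // B' mB'; exact: IH.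
- by apply: g0; rewrite mem_head.
Qed.

End independent_product.

Lemma big_eta_with (U V : Type) (F : nat -> U -> V) (idx : V) (op : Monoid.com_law idx)
    (I : seq nat) (a : nat) (g : nat -> U) (u : U) :
  uniq I -> a \in I ->
  \big[op/idx]_(i <- I) F i ([eta g with a |-> u] i) =
  op (F a u) (\big[op/idx]_(i <- I | i != a) F i (g i)).
Proof.
by move=> uI aI; rewrite (bigD1_seq a) //= eqxx; congr (op _ _);
  apply: eq_bigr => i /negbTE ->.
Qed.

Section independent_expectation.
Context d (T : measurableType d) (R : realType) (P : probability T R).
Variable X : nat -> {RV P >-> R}.
Hypothesis indX : mutually_independent X.

Lemma Lfun1_abs_lty (f : T -> R) : f \in Lfun P 1 -> (\int[P]_w `|f w|%:E < +oo)%E.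
Proof. by move=> /Lfun1_integrable/integrableP[]. Qed.

Lemma Lfun_prod_indep (g : nat -> R -> R) (I : seq nat) : uniq I ->
  (forall i, measurable_fun setT (g i)) ->
  (forall i, i \in I -> (fun w => g i (X i w)) \in Lfun P 1) ->
  (fun w => \prod_(i <- I) g i (X i w)) \in Lfun P 1.
Proof.
move=> uI mg Lg; apply/Lfun1_integrable/integrableP; split.
  by apply/measurable_EFinP; apply: measurable_prod => i _; exact: measurableT_comp.
under eq_integral do rewrite /comp abse_EFin normr_prod.
have := ge0_integral_prod_indep indX (g := fun i y => `|g i y|) (J := [::])
  (B := fun=> setT) (I := I).
rewrite joint_event_nil probability_setT mul1e => ->//.
- rewrite ltey_eq big_seq prode_fin_num // => i iI.
  by rewrite ge0_fin_numE ?Lfun1_abs_lty ?Lg // integral_ge0.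
- by move=> i; apply: measurableT_comp.
- by move=> i iI; exact/Lfun1_abs_lty/Lg.
Qed.

Lemma ge0_expectation_prod_indep (g : nat -> R -> R) (I : seq nat) : uniq I ->
  (forall i, measurable_fun setT (g i)) ->
  (forall i, i \in I -> forall y, 0 <= g i y) ->
  (forall i, i \in I -> (fun w => g i (X i w)) \in Lfun P 1) ->
  ('E_P[fun w => (\prod_(i <- I) g i (X i w))%R] =
   \prod_(i <- I) 'E_P[fun w => g i (X i w)])%E.
Proof.
move=> uI mg g0 Lg; rewrite expectation.unlock.
have := ge0_integral_prod_indep indX (J := [::]) (B := fun=> setT) mg g0.
rewrite joint_event_nil probability_setT mul1e; apply=> // i iI.
have := Lfun1_abs_lty (Lg i iI); congr (_ < _)%E.
by apply: eq_integral => w _; rewrite ger0_norm ?g0.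
Qed.

Let factorizes (I : seq nat) (f : nat -> R -> R) :=
  ('E_P[fun w => (\prod_(i <- I) f i (X i w))%R] =
   \prod_(i <- I) 'E_P[fun w => f i (X i w)])%E.

Lemma factorizes_eta_withB (g : nat -> R -> R) (I : seq nat) (a : nat) (u v : R -> R) :
  uniq I -> a \in I ->
  (forall i, measurable_fun setT (g i)) -> measurable_fun setT u -> measurable_fun setT v ->
  (forall i, i \in I -> (fun w => g i (X i w)) \in Lfun P 1) ->
  (fun w => u (X a w)) \in Lfun P 1 -> (fun w => v (X a w)) \in Lfun P 1 ->
  factorizes I [eta g with a |-> u] -> factorizes I [eta g with a |-> v] ->
  factorizes I [eta g with a |-> u \- v].
Proof.
move=> uI aI mg mu mv Lg Lu Lv; rewrite /factorizes => Eu Ev.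
have Lprod f : measurable_fun setT f -> (fun w => f (X a w)) \in Lfun P 1 ->
    (fun w => \prod_(i <- I) [eta g with a |-> f] i (X i w)) \in Lfun P 1.
  move=> mf Lf; apply: Lfun_prod_indep => // [i|i iI] /=.
    by case: eqP.
  by case: eqP => [->|_] //; exact: Lg.
transitivity ('E_P[((fun w => \prod_(i <- I) [eta g with a |-> u] i (X i w)) \-
                   (fun w => \prod_(i <- I) [eta g with a |-> v] i (X i w)))%R])%E.
  congr expectation; apply/funext => w /=.
  by rewrite !(big_eta_with (fun i f => f (X i w))) // -mulrBl.
rewrite expectationB ?Lprod // Eu Ev.
rewrite !(big_eta_with (fun i f => 'E_P[fun w => f (X i w)]%E)) //=.
have finE : (\prod_(i <- I | i != a) 'E_P[fun w => g i (X i w)])%E \is a fin_num.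
  by rewrite big_seq_cond prode_fin_num // => i /andP[iI _]; exact/expectation_fin_num/Lg.
by rewrite -muleBl ?fin_num_adde_defl ?fin_numN ?expectation_fin_num // -expectationB.
Qed.

Lemma expectation_prod_indep (g : nat -> R -> R) (I : seq nat) : uniq I ->
  (forall i, measurable_fun setT (g i)) ->
  (forall i, i \in I -> (fun w => g i (X i w)) \in Lfun P 1) ->
  ('E_P[fun w => (\prod_(i <- I) g i (X i w))%R] =
   \prod_(i <- I) 'E_P[fun w => g i (X i w)])%E.
Proof.
(* Induction on a list [K] outside of which [f] is nonnegative; an index [a] of [K] is
   removed by writing [f a] as the difference of its positive and negative parts. *)
move=> uI; suff signed_on (K : seq nat) f : (forall i, measurable_fun setT (f i)) ->
    (forall i, i \in I -> (fun w => f i (X i w)) \in Lfun P 1) ->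
    (forall i, i \in I -> i \notin K -> forall y, 0 <= f i y) -> factorizes I f.
  by move=> mg Lg; apply: (signed_on I) => // i ->.
elim: K f => [|a K IH] {}g mg Lg g0.
  by apply: ge0_expectation_prod_indep => // i iI; exact: g0.
have [aI|aI] := boolP (a \in I); last first.
  apply: IH => // i iI iK; apply: g0; rewrite // in_cons negb_or iK andbT.
  by apply: contraNneq aI => <-.
have mpos := measurable_funrpos (mg a); have mneg := measurable_funrneg (mg a).
have Lpos : (fun w => (g a)^\+ (X a w)) \in Lfun P 1.
  exact/Lfun1_integrable/(integrable_funrpos measurableT)/Lfun1_integrable/Lg.
have Lneg : (fun w => (g a)^\- (X a w)) \in Lfun P 1.
  exact/Lfun1_integrable/(integrable_funrneg measurableT)/Lfun1_integrable/Lg.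
have -> : g = [eta g with a |-> (g a)^\+ \- (g a)^\-].
  apply/funext => i /=; case: eqP => // ->; apply/funext => y.
  by rewrite -[in LHS](funrposBneg (g a)).
have IHa u : measurable_fun setT u -> (fun w => u (X a w)) \in Lfun P 1 ->
    (forall y, 0 <= u y) -> factorizes I [eta g with a |-> u].
  move=> mu Lu u0; apply: IH => [i|i iI|i iI iK y] /=.
  - by case: eqP.
  - by case: eqP => [->|_] //; exact: Lg.
  - case: eqP => [_|/eqP ia]; first exact: u0.
    by apply: g0; rewrite // in_cons negb_or ia.
by apply: factorizes_eta_withB => //; apply: IHa.
Qed.

End independent_expectation.

Lemma exprn_div_fact_le_expR (R : realType) (x : R) (m : nat) :
  0 <= x -> x ^+ m / m`!%:R <= expR x.
Proof.
move=> x0; case: m => [|n]; first by rewrite expr0 fact0 divr1 -expR0 ler_expR.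
by apply: le_trans (expR_ge1Dxn n x0); rewrite lerDr.
Qed.

Lemma normrX_le_expR (R : realType) (s y : R) (m : nat) : 0 < s ->
  `|y ^+ m| <= m`!%:R / s ^+ m * (expR (y * s) + expR (y * - s)).
Proof.
move=> s0; have fact0 : m`!%:R != 0 :> R by rewrite pnatr_eq0 -lt0n fact_gt0.
have sm0 : s ^+ m != 0 by rewrite expf_neq0 // gt_eqF.
have -> : `|y ^+ m| = m`!%:R / s ^+ m * ((`|y| * s) ^+ m / m`!%:R).
  by rewrite normrX exprMn; field; rewrite fact0 sm0.
apply: ler_wpM2l; first by rewrite divr_ge0 ?exprn_ge0 ?ltW.
apply: le_trans (exprn_div_fact_le_expR m (mulr_ge0 (normr_ge0 y) (ltW s0))) _.
have [y0|y0] := leP 0 y.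
  by rewrite ger0_norm // lerDl expR_ge0.
by rewrite ltr0_norm // mulNr -mulrN lerDr expR_ge0.
Qed.

Section moments.
Context d (T : measurableType d) (R : realType) (P : probability T R).

Lemma Lfun_mmt_gen_fun (Y : {RV P >-> R}) (t : R) : 'M_P Y t \is a fin_num ->
  (fun w => expR (Y w * t)) \in Lfun P 1.
Proof.
rewrite /mmt_gen_fun expectation.unlock => fin.
apply/Lfun1_integrable/integrableP; split.
  apply/measurable_EFinP; apply: measurableT_comp; first exact: measurable_expR.
  by apply: measurable_funM => //; exact: measurable_cst.
under eq_integral do rewrite /comp abse_EFin gtr0_norm ?expR_gt0 //.
by rewrite ltey_eq fin.
Qed.

Lemma Lfun_exprn_mmt_gen_fun (Y : {RV P >-> R}) (s : R) : 0 < s ->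
  'M_P Y s \is a fin_num -> 'M_P Y (- s) \is a fin_num ->
  forall m, (fun w => Y w ^+ m) \in Lfun P 1.
Proof.
move=> s0 /Lfun_mmt_gen_fun Ls /Lfun_mmt_gen_fun Lns m.
pose C := m`!%:R / s ^+ m.
have iB : P.-integrable setT
    (EFin \o (C \o* ((fun w => expR (Y w * s)) \+ (fun w => expR (Y w * - s))))).
  exact/Lfun1_integrable/Lfun_scale/rpredD.
apply/Lfun1_integrable; apply: le_integrable iB => //.
  by apply/measurable_EFinP; exact: measurable_funX.
move=> w _; rewrite /comp !abse_EFin lee_fin /= mulrC.
by apply: le_trans (normrX_le_expR _ m s0) _; exact: ler_norm.
Qed.

Lemma ge0_integral_same_distribution (Y Z : {RV P >-> R}) (f : R -> \bar R) :
  same_distribution Y Z -> measurable_fun setT f -> (forall y, (0 <= f y)%E) ->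
  (\int[P]_w f (Z w) = \int[P]_w f (Y w))%E.
Proof.
move=> YZ mf f0.
rewrite -[LHS](ge0_integral_distribution Z mf f0) -[RHS](ge0_integral_distribution Y mf f0).
by apply: eq_measure_integral => A mA _; exact: YZ.
Qed.

Lemma Lfun_same_distribution (Y Z : {RV P >-> R}) (h : R -> R) :
  same_distribution Y Z -> measurable_fun setT h ->
  (fun w => h (Y w)) \in Lfun P 1 -> (fun w => h (Z w)) \in Lfun P 1.
Proof.
move=> YZ mh /Lfun1_abs_lty hY; apply/Lfun1_integrable/integrableP; split.
  by apply/measurable_EFinP; exact: measurableT_comp.
under eq_integral do rewrite /comp abse_EFin.
rewrite (@ge0_integral_same_distribution Y Z (fun y => `|h y|%:E)) //.
by apply/measurable_EFinP; apply: measurableT_comp => //; exact: normr_measurable.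
Qed.

Lemma expectation_same_distribution (Y Z : {RV P >-> R}) (h : R -> R) :
  same_distribution Y Z -> measurable_fun setT h ->
  ('E_P[fun w => h (Z w)] = 'E_P[fun w => h (Y w)])%E.
Proof.
move=> YZ mh; rewrite !expectation.unlock integralE [RHS]integralE !funerpos !funerneg.
congr (_ - _)%E.
- apply: (@ge0_integral_same_distribution Y Z (fun y => (h^\+ y)%:E)) => // [|y].
    by apply/measurable_EFinP; exact: measurable_funrpos.
  by rewrite lee_fin funrpos_ge0.
- apply: (@ge0_integral_same_distribution Y Z (fun y => (h^\- y)%:E)) => // [|y].
    by apply/measurable_EFinP; exact: measurable_funrneg.
  by rewrite lee_fin funrneg_ge0.
Qed.

End moments.

Lemma fine_prod (R : numDomainType) (I : Type) (s : seq I) (f : I -> \bar R) :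
  (forall i, f i \is a fin_num) -> fine (\prod_(i <- s) f i)%E = \prod_(i <- s) fine (f i).
Proof.
move=> ff; elim: s => [|x s IH]; first by rewrite !big_nil.
by rewrite !big_cons fineM ?IH //; exact: prode_fin_num.
Qed.

Section expectation_linear.
Context d (T : measurableType d) (R : realType) (P : probability T R).

Lemma fine_expectation_sum (I : eqType) (s : seq I) (F : I -> T -> R) :
  (forall i, F i \in Lfun P 1) ->
  fine 'E_P[fun w => \sum_(i <- s) F i w] = \sum_(i <- s) fine 'E_P[F i].
Proof.
move=> LF; rewrite -fct_sumE -(big_map F xpredT id) expectation_sum.
  by rewrite big_map sum_fine // => i _; exact/expectation_fin_num.
by move=> _ /mapP[i _ ->].
Qed.

Lemma Lfun_scalel (a : R) (f : T -> R) : f \in Lfun P 1 -> (fun w => a * f w) \in Lfun P 1.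
Proof. by move=> Lf; rewrite (_ : (fun w => a * f w) = a *: f) // rpredZ. Qed.

Lemma fine_expectationZl (a : R) (f : T -> R) : f \in Lfun P 1 ->
  fine 'E_P[fun w => a * f w] = a * fine 'E_P[f].
Proof.
move=> Lf; rewrite (_ : (fun w => _) = a \o* f); last first.
  by apply/funext => w; rewrite /= mulrC.
by rewrite expectationZl // fineM // expectation_fin_num.
Qed.

End expectation_linear.

Section partial_sum_moments.
Context d (T : measurableType d) (R : realType) (P : probability T R).
Variable X : nat -> {RV P >-> R}.
Hypothesis indX : mutually_independent X.
Hypothesis LX : forall j m, (fun w => X j w ^+ m) \in Lfun P 1.

Definition monomial (c : nat -> nat) (i : nat) (w : T) : R := \prod_(j < i) X j w ^+ c j.

Lemma partial_sumX_expand i m w :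
  partial_sum X i w ^+ m =
  \sum_(f : {ffun 'I_m -> 'I_i}) monomial (fun j => #|[pred l | val (f l) == j]|) i w.
Proof.
rewrite /partial_sum -[in LHS](card_ord m) -prodr_const bigA_distr_bigA.
apply: eq_bigr => f _; rewrite (partition_big f xpredT) //=.
apply: eq_bigr => j _; rewrite (eq_bigr (fun=> X j w)) => [|l /eqP -> //].
by rewrite prodr_const.
Qed.

Lemma monomialE c i : monomial c i = fun w => \prod_(j <- iota 0 i) X j w ^+ c j.
Proof.
apply/funext => w.
by rewrite /monomial -(big_mkord xpredT (fun j => X j w ^+ c j)) /index_iota subn0.
Qed.

Lemma Lfun_monomial c i : monomial c i \in Lfun P 1.
Proof.
rewrite monomialE; apply: (Lfun_prod_indep indX (g := fun j y => y ^+ c j)) => //.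
exact: iota_uniq.
Qed.

Lemma fine_expectation_monomial c i :
  fine 'E_P[monomial c i] = \prod_(j < i) fine 'E_P[fun w => X j w ^+ c j].
Proof.
rewrite monomialE (expectation_prod_indep indX (g := fun j y => y ^+ c j)) //; last first.
  exact: iota_uniq.
rewrite fine_prod => [|j]; last exact/expectation_fin_num.
by rewrite -(big_mkord xpredT (fun j => fine 'E_P[fun w => X j w ^+ c j])) /index_iota subn0.
Qed.

Lemma monomial_mulX c i k w :
  monomial c i w * X i w ^+ k = monomial [eta c with i |-> k] i.+1 w.
Proof.
rewrite /monomial big_ord_recr /= eqxx; congr (_ * _); apply: eq_bigr => j _ /=.
by rewrite ifN // neq_ltn ltn_ord.
Qed.

Lemma Lfun_monomial_mulX c i k : (fun w => monomial c i w * X i w ^+ k) \in Lfun P 1.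
Proof. by under eq_fun do rewrite monomial_mulX; exact: Lfun_monomial. Qed.

Lemma fine_expectation_monomial_mulX c i k :
  fine 'E_P[fun w => monomial c i w * X i w ^+ k] =
  fine 'E_P[monomial c i] * fine 'E_P[fun w => X i w ^+ k].
Proof.
under eq_fun do rewrite monomial_mulX.
rewrite !fine_expectation_monomial big_ord_recr /= eqxx; congr (_ * _).
by apply: eq_bigr => j _ /=; rewrite ifN // neq_ltn ltn_ord.
Qed.

Lemma partial_sumX_mulE i m k :
  (fun w => partial_sum X i w ^+ m * X i w ^+ k) =
  \sum_(f : {ffun 'I_m -> 'I_i})
    (fun w => monomial (fun j => #|[pred l | val (f l) == j]|) i w * X i w ^+ k).
Proof. by rewrite fct_sumE; apply/funext => w; rewrite partial_sumX_expand mulr_suml. Qed.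

Lemma Lfun_partial_sumX_mul i m k :
  (fun w => partial_sum X i w ^+ m * X i w ^+ k) \in Lfun P 1.
Proof.
by rewrite partial_sumX_mulE rpred_sum // => f _; exact: Lfun_monomial_mulX.
Qed.

Lemma fine_expectation_partial_sumX_mul i m k :
  fine 'E_P[fun w => partial_sum X i w ^+ m * X i w ^+ k] =
  fine 'E_P[fun w => partial_sum X i w ^+ m] * fine 'E_P[fun w => X i w ^+ k].
Proof.
rewrite partial_sumX_mulE fct_sumE fine_expectation_sum => [|f]; last exact: Lfun_monomial_mulX.
under eq_bigr do rewrite fine_expectation_monomial_mulX.
rewrite -mulr_suml; congr (_ * _).
rewrite -fine_expectation_sum => [|f]; last exact: Lfun_monomial.
by congr (fine 'E_P[_]); apply/funext => w; rewrite partial_sumX_expand.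
Qed.

End partial_sum_moments.

Section formal_power_series.
Variable R : comNzRingType.

Lemma fps_exp_coef (a : nat -> R) (n k m : nat) : (m <= n)%N ->
  fps_exp a k m = ((\poly_(i < n.+1) a i) ^+ k)`_m.
Proof.
elim: k m => [|k IH] m mn; first by rewrite expr0 coef1.
rewrite exprS coefM; apply: eq_bigr => -[j /= jm] _.
have jn : (j < n.+1)%N by lia.
by rewrite coef_poly jn -IH // (leq_trans (leq_subr _ _) mn).
Qed.

Lemma coef_exprn_eq0 (q : {poly R}) (k m : nat) : q`_0 = 0 -> (m < k)%N ->
  (q ^+ k)`_m = 0.
Proof.
move=> q0 mk; have qX : q = drop_poly 1 q * 'X^1.
  rewrite -[LHS](poly_take_drop 1) [take_poly 1 q](_ : _ = 0) ?add0r //.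
  by apply/polyP => i; rewrite coef_take_poly coef0; case: i.
by rewrite qX exprMn -exprM mul1n coefMXn mk.
Qed.

Lemma fps_exp_scale_sub1 (a : nat -> R) (y : R) (k n : nat) :
  fps_exp (fun m => y * (a m - fps_one m)) k n =
  y ^+ k * (((\poly_(i < n.+1) a i) - 1) ^+ k)`_n.
Proof.
rewrite (fps_exp_coef _ _ (leqnn n)) -coefZ -exprZn.
rewrite [\poly_(i < n.+1) _](_ : _ = y *: (\poly_(i < n.+1) a i - 1)) //.
apply/polyP => m; rewrite coefZ coefB coef1 !coef_poly /fps_one.
case: ltnP => // nm; have /negbTE -> : m != 0%N by rewrite -lt0n (leq_trans _ nm).
by rewrite subrr mulr0.
Qed.

Lemma fps_exp_sub1_binomial (a : nat -> R) (y : R) (k n : nat) :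
  fps_exp (fun m => y * (a m - fps_one m)) k n =
  y ^+ k * \sum_(i < k.+1) 'C(k, i)%:R * (-1) ^+ (k - i) * fps_exp a i n.
Proof.
rewrite fps_exp_scale_sub1 addrC exprDn coef_sum; congr (_ * _).
apply: eq_bigr => i _; rewrite coefMn -(rmorph_sign polyC) coefCM.
by rewrite -(fps_exp_coef _ _ (leqnn n)) mulr_natl mulrnAl.
Qed.

Lemma fps_exp_sub1_eq0 (a : nat -> R) (y : R) (k n : nat) : a 0 = 1 -> (n < k)%N ->
  fps_exp (fun m => y * (a m - fps_one m)) k n = 0.
Proof.
move=> a0 nk; rewrite fps_exp_scale_sub1 coef_exprn_eq0 ?mulr0 //.
by rewrite coefB coef1 coef_poly a0 subrr.
Qed.

End formal_power_series.

Section iid_moments.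
Context d (T : measurableType d) (R : realType) (P : probability T R).
Variables (Y : {RV P >-> R}) (Ys : nat -> {RV P >-> R}).
Hypothesis YsY : forall j, same_distribution Y (Ys j).
Hypothesis indY : mutually_independent Ys.
Hypothesis LY : forall m, (fun w => Y w ^+ m) \in Lfun P 1.

Let LYs j m : (fun w => Ys j w ^+ m) \in Lfun P 1.
Proof. exact: (Lfun_same_distribution (h := fun y => y ^+ m) (YsY j) (measurable_funX _ _) (LY m)). Qed.

Lemma mgf_coef0 : mgf_coef Y 0 = 1.
Proof.
rewrite /mgf_coef (_ : (fun w => Y w ^+ 0) = cst 1); last by apply/funext => w; rewrite expr0.
by rewrite expectation_cst fact0 divr1.
Qed.

Lemma sum_moment_succ n i : sum_moment Ys n i.+1 =
  \sum_(l < n.+1) 'C(n, l)%:R * sum_moment Ys (n - l) i * fine 'E_P[fun w => Y w ^+ l].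
Proof.
have LS (l : nat) := Lfun_partial_sumX_mul indY LYs i (n - l) l.
rewrite /sum_moment (_ : (fun w => _) = fun w =>
    \sum_(l < n.+1) 'C(n, l)%:R * (partial_sum Ys i w ^+ (n - l) * Ys i w ^+ l)).
  rewrite fine_expectation_sum => [|l]; last exact: Lfun_scalel.
  apply: eq_bigr => l _; rewrite fine_expectationZl // -mulrA.
  rewrite fine_expectation_partial_sumX_mul //.
  by rewrite (expectation_same_distribution (h := fun y => y ^+ l) (YsY i)) //; exact: measurable_funX.
apply/funext => w; rewrite /partial_sum big_ord_recr /= exprDn.
by apply: eq_bigr => l _; rewrite mulr_natl.
Qed.

Lemma sum_moment_fps_exp n i : sum_moment Ys n i = n`!%:R * fps_exp (mgf_coef Y) i n.
Proof.
elim: i n => [|i IH] n.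
  rewrite /sum_moment /fps_exp /= /fps_one (_ : (fun w => _) = cst (n == 0)%:R).
    by rewrite expectation_cst; case: n => [|n]; rewrite ?fact0 ?mul1r ?mulr0.
  by apply/funext => w; rewrite /partial_sum big_ord0 expr0n.
rewrite sum_moment_succ /fps_exp iterS -/(fps_exp _ i) /fps_mul mulr_sumr.
apply: eq_bigr => -[l /= ln] _; rewrite IH /mgf_coef.
have fact_split : n`!%:R = 'C(n, l)%:R * l`!%:R * (n - l)`!%:R :> R.
  by rewrite -!natrM -mulnA bin_fact.
by rewrite fact_split; field; rewrite pnatr_eq0 -lt0n fact_gt0.
Qed.

End iid_moments.

Lemma lim_series_finite (R : realType) (f : nat -> R) (n : nat) :
  (forall k, (n < k)%N -> f k = 0) -> limn (series f) = \sum_(k < n.+1) f k.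
Proof.
move=> f0; apply: lim_near_cst => //; near=> N.
have nN : (n.+1 <= N)%N by near: N; exists n.+1.
rewrite /series /= (big_cat_nat _ nN) //= [X in _ + X]big_nat_cond.
rewrite [X in _ + X]big1 ?addr0 ?big_mkord // => k /andP[/andP[nk _] _].
exact: f0.
Unshelve. all: by end_near.
Qed.

Theorem theorem2p1 (d : measure_display) (T : measurableType d) (R : realType)
  (P : probability T R) (Y : {RV P >-> R}) (Ys : nat -> {RV P >-> R}) :
  (exists2 r0 : R, 0 < r0 & forall t : R, `|t| < r0 -> 'M_P Y t \is a fin_num) ->
  (forall j, same_distribution Y (Ys j)) ->
  mutually_independent Ys ->
  forall (n : nat) (x y : R),
    bell_phiY Y n x y = \sum_(k < n.+1) stirling2Y Ys n k * falling x k * y ^+ k.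
Proof.
move=> [r r0 mgf_fin] YsY indY n x y.
have s0 : 0 < r / 2 by rewrite divr_gt0.
have sr : `|r / 2| < r by rewrite gtr0_norm //; lra.
have Nsr : `|- (r / 2)| < r by rewrite normrN.
have LY := Lfun_exprn_mmt_gen_fun s0 (mgf_fin _ sr) (mgf_fin _ Nsr).
rewrite /bell_phiY /= (lim_series_finite (n := n)) => [|k nk]; last first.
  by rewrite fps_exp_sub1_eq0 ?mulr0 // mgf_coef0.
rewrite mulr_sumr; apply: eq_bigr => -[k /= kn] _.
rewrite fps_exp_sub1_binomial /stirling2Y /gbinom.
under [in RHS]eq_bigr do rewrite (sum_moment_fps_exp YsY indY LY) mulrCA.
by rewrite -mulr_sumr; ring.
Qed.
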